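(* Let $M\subseteq V$, let $SB^\ast$ be a minimum satellite bridge for $M$, and let $C\subseteq V_S$ be a set of satellite nodes each of which is adjacent in $\widetilde G$ to at least one vertex of $M$. Then there is a tree in $\widetilde G_s$ whose vertex set contains $N(SB^\ast)\cup C$ and which has at most $|N(SB^\ast)|+3|C|-1$ edges. Consequently, every minimum Steiner tree $ST^\ast$ of $C$ in $\widetilde G_s$ (a tree in $\widetilde G_s$ containing $C$ with the minimum number of edges) satisfies $|E(ST^\ast)|\le |N(SB^\ast)|+3|C|-1$.
   Context: Let $G=(V,E)$ be a finite, simple, undirected, connected graph with $|V|\ge 2$. Fix a positive integer $K$ and, for every $u\in V$, a nonempty set $\Gamma(u)\subseteq\{1,\dots,K\}$. Let $nb_G(u)$ be the neighbours of $u$ in $G$. For a tree $T$, $N(T)$ and $E(T)$ are its vertex and edge sets. The extended graph $\widetilde G=(\widetilde V,\widetilde E)$ of $G$: (i) initially $\widetilde V=V$, $\widetilde E=\emptyset$; (ii) for each $u\in V$ and each $i\in\bigcup_{v\in nb_G(u)}\Gamma(v)$, add a new vertex $\lambda(u,i)$ (satellite node of $u$; $u$ is its nuclear node); $\Psi(u)$ is the set of satellite nodes of $u$; (iii) for each $u\in V$, join every pair of distinct vertices of $\Psi(u)\cup\{u\}$; (iv) for each edge $\{u,v\}\in E$ (in each orientation $(u,v)$), each $i\in\Gamma(v)$, $j\in\Gamma(u)$, add edges $\{\lambda(u,i),\lambda(v,j)\}$, $\{\lambda(u,i),v\}$, $\{u,\lambda(v,j)\}$. $V_S=\widetilde V\setminus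 V$ is the set of satellite nodes, and $\widetilde G_s$ is the subgraph of $\widetilde G$ induced by $V_S$. Given $M\subseteq V$, a satellite bridge is a (nonempty) subtree $SB$ of $\widetilde G$ all of whose vertices are satellite nodes and such that every vertex of $M$ is adjacent in $\widetilde G$ to at least one vertex of $SB$. A minimum satellite bridge $SB^\ast$ is a satellite bridge with the minimum number of vertices. *)

From mathcomp Require Import all_boot.
Set Implicit Arguments. Unset Strict Implicit. Unset Printing Implicit Defensive.

(* Vertices of the extended graph: inl u = nuclear node u,
   inr (u, i) = satellite node lambda(u, i).  Colours 1..K are encoded
   by 'I_K (colour c is represented by c-1). *)
Definition xvert (V : finType) (K : nat) : finType := (V + V * 'I_K)%type.

Section Extended.
Variables (V : finType) (K : nat) (e : rel V) (Gamma : V -> {set 'I_K}).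

(* lambda(u,i) exists iff i is in the union of Gamma(v) over neighbours v of u *)
Definition sat_exists (p : V * 'I_K) : bool :=
  [exists v, e p.1 v && (p.2 \in Gamma v)].

Definition is_sat (x : xvert V K) : bool :=
  match x with inl _ => false | inr p => sat_exists p end.

Definition nuc_sat (u : V) (p : V * 'I_K) : bool :=
  ((p.1 == u) && sat_exists p)
  || (e u p.1 && (p.2 \in Gamma u)).

Definition sat_sat (p q : V * 'I_K) : bool :=
  [&& p.1 == q.1, p.2 != q.2, sat_exists p & sat_exists q]
  || [&& e p.1 q.1, p.2 \in Gamma q.1 & q.2 \in Gamma p.1].

Definition xedge : rel (xvert V K) := fun x y =>
  match x, y with
  | inl _, inl _ => false
  | inl u, inr p => nuc_sat u p
  | inr p, inl u => nuc_sat u p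
  | inr p, inr q => sat_sat p q
  end.
End Extended.

Section Trees.
Variable T : finType.

Definition tadj (F : {set {set T}}) : rel T := fun x y => [set x; y] \in F.

Definition is_tree (adj : rel T) (N : {set T}) (F : {set {set T}}) : Prop :=
  [/\ N != set0,
      (forall f, f \in F -> exists x y,
          [/\ x != y, f = [set x; y], x \in N, y \in N & adj x y]),
      (forall x y, x \in N -> y \in N -> connect (tadj F) x y) &
      (forall s : seq T, 3 <= size s -> uniq s -> ~~ cycle (tadj F) s)].
End Trees.

Section Bridge.
Variables (V : finType) (K : nat) (e : rel V) (Gamma : V -> {set 'I_K}).

Definition sat_tree (N : {set xvert V K}) (F : {set {set xvert V K}}) : Prop :=
  is_tree (xedge e Gamma) N F /\ {subset N <= is_sat e Gamma}.

Definition sat_bridge (M : {set V}) N F : Prop :=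
  sat_tree N F /\ (forall m, m \in M -> exists2 x, x \in N & xedge e Gamma (inl m) x).

Definition min_sat_bridge (M : {set V}) N F : Prop :=
  sat_bridge M N F /\ (forall N' F', sat_bridge M N' F' -> #|N| <= #|N'|).

Definition steiner_tree (C : {set xvert V K}) N F : Prop :=
  sat_tree N F /\ C \subset N.

Definition min_steiner_tree (C : {set xvert V K}) N F : Prop :=
  steiner_tree C N F /\ (forall N' F', steiner_tree C N' F' -> #|F| <= #|F'|).
End Bridge.

From mathcomp Require Import all_boot.
Set Implicit Arguments. Unset Strict Implicit. Unset Printing Implicit Defensive.

(* Every terminal c is adjacent to some m in M, and m is dominated by a vertex x of
   SB*.  Both c and x are equal or adjacent to satellites lambda(m, k) of m itself, and
   any two satellites of m are adjacent, so at most three new satellites connect c to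
   the current vertex set.  Starting from the vertices of SB*, this yields a connected
   set of satellites containing C, of size at most |N SB*| + 3|C|, and a spanning tree
   of it has one edge fewer. *)

Section Trees.
Variables (T : finType) (adj : rel T).

Definition induced (W : {set T}) : rel T :=
  fun x y => [&& x \in W, y \in W & adj x y].

Definition connected_in (W : {set T}) : Prop :=
  forall x y, x \in W -> y \in W -> connect (induced W) x y.

Lemma path_exits (A : {set T}) (r : rel T) x p :
  x \in A -> last x p \notin A -> path r x p ->
  exists a b, [/\ a \in A, b \notin A & r a b].
Proof.
elim: p x => [|y p IHp] x /= xA; first by rewrite xA.
move=> lastA /andP[rxy pathp]; have [yA|yA] := boolP (y \in A).
  exact: IHp yA lastA pathp.
by exists x, y.
Qed.

Lemma is_tree_set1 r : is_tree adj [set r] set0.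
Proof.
split=> [|f|x y|[|z s] //= _ _].
- by apply/set0Pn; exists r; rewrite inE.
- by rewrite inE.
- by rewrite !inE => /eqP-> /eqP->; apply: connect0.
- by rewrite rcons_path {2}/tadj inE andbF.
Qed.

Lemma tree_edge_mem N F x y : is_tree adj N F -> [set x; y] \in F -> x \in N.
Proof.
case=> _ edgesF _ _ /edgesF[x' [y' [_ Exy x'N y'N _]]].
have : x \in [set x'; y'] by rewrite -Exy set21.
by case/set2P=> ->.
Qed.

Section AddLeaf.
Variables (N : {set T}) (F : {set {set T}}) (a b : T).
Hypotheses (treeF : is_tree adj N F) (aN : a \in N) (bN : b \notin N).

Lemma add_leaf_nbr w : w != b -> tadj ([set a; b] |: F) b w -> w = a.
Proof.
move=> wb; rewrite /tadj in_setU1 => /orP[/eqP Eab|bwF].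
  have : w \in [set a; b] by rewrite -Eab set22.
  by case/set2P=> // Ew; rewrite Ew eqxx in wb.
by move: bN; rewrite (tree_edge_mem treeF bwF).
Qed.

Lemma add_leaf_acyclic s :
  3 <= size s -> uniq s -> ~~ cycle (tadj ([set a; b] |: F)) s.
Proof.
move=> s3 uniq_s; apply/negP=> cyc.
have [bs|bs] := boolP (b \in s); last first.
  case: treeF => _ _ _ /(_ s s3 uniq_s)/negP; apply.
  apply: (sub_in_cycle (P := mem s)) cyc; last by apply/allP.
  move=> u v us vs; rewrite /tadj in_setU1 => /orP[/eqP Eab|//].
  have : b \in [set u; v] by rewrite Eab set22.
  by case/set2P=> Eb; rewrite -Eb in us vs; rewrite (negbTE bs) in us vs.
have [i t Et] := rot_to bs.
move: s3 uniq_s cyc; rewrite -(size_rot i) -(rot_uniq i) -(rot_cycle i) Et.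
case: t {Et} => [|w [|z t]] //= _ /and4P[bNwzt wNzt _ _] /and3P[bw _].
rewrite rcons_path => /andP[_ lastb].
have neqb u : u \in w :: z :: t -> u != b by apply: contraTneq => ->.
have wa := add_leaf_nbr (neqb w (mem_head _ _)) bw.
have lasta : last z t = a.
  apply: add_leaf_nbr; first by apply: neqb; rewrite in_cons mem_last orbT.
  by rewrite /tadj setUC.
by move: wNzt; rewrite wa -lasta mem_last.
Qed.

Lemma is_tree_add_leaf : adj a b -> is_tree adj (b |: N) ([set a; b] |: F).
Proof.
move=> ab; case: (treeF) => _ edgesF connF _.
have neq_ab : a != b by apply: contraNneq bN => <-.
split; last exact: add_leaf_acyclic.
- by apply/set0Pn; exists b; rewrite setU11.
- move=> f; rewrite in_setU1 => /orP[/eqP->|/edgesF[x [y [xy Ef xN yN axy]]]].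
    by exists a, b; split; rewrite // !inE ?eqxx ?aN ?orbT.
  by exists x, y; split; rewrite // !inE ?xN ?yN ?orbT.
- set F' := _ |: F.
  have liftF u v : u \in N -> v \in N -> connect (tadj F') u v.
    move=> uN vN; apply: connect_sub (connF u v uN vN) => x y xy.
    by apply: connect1; rewrite /tadj setU1r.
  have ab' : connect (tadj F') a b by apply: connect1; rewrite /tadj setU11.
  have ba' : connect (tadj F') b a by apply: connect1; rewrite /tadj setUC setU11.
  move=> x y; rewrite !inE => /orP[/eqP->|xN] /orP[/eqP->|yN].
  + exact: connect0.
  + exact: connect_trans ba' (liftF _ _ aN yN).
  + exact: connect_trans (liftF _ _ xN aN) ab'.
  + exact: liftF.
Qed.

Lemma card_add_leaf : #|[set a; b] |: F| = #|F|.+1.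
Proof.
have abF : [set a; b] \notin F.
  by apply: contra bN => abF; apply: (tree_edge_mem (y := a) treeF); rewrite setUC.
by rewrite cardsU1 abF.
Qed.

End AddLeaf.

Lemma connect_induced_sub (W W' : {set T}) x y :
  W \subset W' -> connect (induced W) x y -> connect (induced W') x y.
Proof.
move=> /subsetP sWW'; apply: connect_sub => u v /and3P[uW vW uv].
by apply: connect1; rewrite /induced !sWW'.
Qed.

Lemma spanning_tree W :
  W != set0 -> connected_in W -> exists F, is_tree adj W F /\ #|F|.+1 = #|W|.
Proof.
case/set0Pn=> r rW connW.
suff grow n (N : {set T}) (F : {set {set T}}) :
    N \subset W -> is_tree adj N F -> #|F|.+1 = #|N| -> #|W :\: N| = n ->
  exists F', is_tree adj W F' /\ #|F'|.+1 = #|W|.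
  apply: (grow _ [set r] set0) => //; rewrite ?sub1set ?cards0 ?cards1 //.
  exact: is_tree_set1.
elim: n N F => [|n IHn] N F sNW treeF cardF cardWN.
  have /eqP WN : W == N by rewrite eqEsubset -setD_eq0 -cards_eq0 cardWN sNW.
  by exists F; rewrite WN.
have [y] : exists y, y \in W :\: N by apply/set0Pn; rewrite -cards_eq0 cardWN.
rewrite inE => /andP[yN yW].
have [x xN] : exists x, x \in N by case: treeF => /set0Pn.
have /connectP[p pathp lasty] := connW x y (subsetP sNW x xN) yW.
have lastN : last x p \notin N by rewrite -lasty.
have [a [b [aN bN /and3P[_ bW ab]]]] := path_exits xN lastN pathp.
apply: (IHn (b |: N) ([set a; b] |: F)).
- by rewrite subUset sub1set bW.
- exact: is_tree_add_leaf.
- by rewrite (card_add_leaf a treeF bN) cardsU1 bN cardF.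
- have bWN : b \in W :\: N by rewrite inE bN bW.
  by move: cardWN; rewrite (cardsD1 b) bWN add1n setUC -setDDl => -[].
Qed.

Hypothesis adj_sym : symmetric adj.

Lemma connected_in_setU1 W x z :
  connected_in W -> x \in W -> x = z \/ adj x z -> connected_in (z |: W).
Proof.
move=> connW xW xz; set W' := z |: W.
have from_x u : u \in W' -> connect (induced W') x u.
  rewrite in_setU1 => /orP[/eqP->|uW]; last first.
    exact: connect_induced_sub (subsetUr _ _) (connW x u xW uW).
  case: xz => [->|xz]; first exact: connect0.
  by apply: connect1; rewrite /induced setU11 setU1r.
have sym : connect_sym (induced W').
  by apply: sym_connect_sym => u v; rewrite /induced adj_sym andbCA.
move=> u v uW' vW'; apply: connect_trans _ (from_x v vW').
by rewrite sym; apply: from_x.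
Qed.

Lemma adj_set2 x y u v :
  x != y -> [set u; v] = [set x; y] -> adj x y -> adj u v.
Proof.
move=> neq_xy Euv xy.
have xuv : x \in [set u; v] by rewrite Euv set21.
have yuv : y \in [set u; v] by rewrite Euv set22.
have : u \in [set x; y] by rewrite -Euv set21.
have : v \in [set x; y] by rewrite -Euv set22.
case/set2P=> Ev; case/set2P=> Eu; subst u v.
- by move: yuv; rewrite setUid inE eq_sym (negbTE neq_xy).
- by rewrite adj_sym.
- by [].
- by move: xuv; rewrite setUid inE (negbTE neq_xy).
Qed.

Lemma tree_connected_in N F : is_tree adj N F -> connected_in N.
Proof.
move=> treeF; case: (treeF) => _ edgesF connF _ x y xN yN.
apply: connect_sub (connF x y xN yN) => u v uvF; apply: connect1.
have [x' [y' [neq_xy Euv _ _ xy]]] := edgesF _ uvF.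
rewrite /induced (tree_edge_mem treeF uvF) (adj_set2 neq_xy Euv xy) andbT.
by apply: (tree_edge_mem (y := u) treeF); rewrite setUC.
Qed.
End Trees.

Section ExtendedGraph.
Variables (V : finType) (K : nat) (e : rel V) (Gamma : V -> {set 'I_K}).
Hypotheses (e_sym : symmetric e) (Gamma_ne : forall u, Gamma u != set0).

Local Notation xedge := (xedge e Gamma).

Lemma xedge_sym : symmetric xedge.
Proof.
case=> [u|[a i]] [v|[b j]] //=.
by rewrite /sat_sat /= e_sym eq_sym (eq_sym j) [sat_exists _ _ _ && _]andbC
  [(j \in _) && _]andbC.
Qed.

Lemma near_own_satellite m c : xedge (inl m) c ->
  exists2 k, sat_exists e Gamma (m, k) & c = inr (m, k) \/ xedge c (inr (m, k)).
Proof.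
case: c => [//|[a i]]; rewrite /= /nuc_sat /=.
case/orP=> [/andP[/eqP-> sat_mi]|/andP[ema iGm]]; first by exists i => //; left.
have [k kGa] := set0Pn _ (Gamma_ne a).
exists k; first by apply/existsP; exists a; rewrite /= ema.
by right; rewrite /= /sat_sat /= e_sym ema iGm kGa orbT.
Qed.

Lemma own_satellites_linked m k k' :
  sat_exists e Gamma (m, k) -> sat_exists e Gamma (m, k') ->
  inr (m, k) = inr (m, k') :> xvert V K \/ xedge (inr (m, k)) (inr (m, k')).
Proof.
move=> sat_mk sat_mk'; have [->|neq_kk'] := eqVneq k k'; first by left.
by right; rewrite /= /sat_sat /= eqxx neq_kk' sat_mk sat_mk'.
Qed.

Lemma attach_terminal (W : {set xvert V K}) c m :
  {subset W <= is_sat e Gamma} -> connected_in xedge W ->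
  (exists2 x, x \in W & xedge (inl m) x) ->
  is_sat e Gamma c -> xedge (inl m) c ->
  exists W' : {set xvert V K}, [/\ W \subset W', c \in W', #|W'| <= #|W| + 3,
    {subset W' <= is_sat e Gamma} & connected_in xedge W'].
Proof.
move=> satW connW [x xW mx] sat_c mc.
have [k sat_mk ck] := near_own_satellite mc.
have [k' sat_mk' xk'] := near_own_satellite mx.
set w : xvert V K := inr (m, k); set w' : xvert V K := inr (m, k').
exists (c |: (w |: (w' |: W))); split.
- by do 3!apply: (subset_trans _ (subsetU1 _ _)).
- exact: setU11.
- have card_le (y : xvert V K) A : #|y |: A| <= #|A|.+1.
    by rewrite cardsU1 -add1n leq_add2r leq_b1.
  rewrite addn3; apply: leq_trans (card_le _ _) _; rewrite ltnS.
  by apply: leq_trans (card_le _ _) _; rewrite ltnS.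
- by move=> y; rewrite !in_setU1 => /or4P[/eqP->|/eqP->|/eqP->|/satW].
- have conn_w' := connected_in_setU1 xedge_sym connW xW xk'.
  have conn_w := connected_in_setU1 xedge_sym conn_w' (setU11 _ _)
                   (own_satellites_linked sat_mk' sat_mk).
  have wc : w = c \/ xedge w c.
    by case: ck => [->|cw]; [left | right; rewrite xedge_sym].
  exact: (connected_in_setU1 xedge_sym conn_w (setU11 _ _) wc).
Qed.

Lemma attach_terminals (M : {set V}) (W0 : {set xvert V K}) (s : seq (xvert V K)) :
  {subset W0 <= is_sat e Gamma} -> connected_in xedge W0 ->
  (forall m, m \in M -> exists2 x, x \in W0 & xedge (inl m) x) ->
  {subset s <= is_sat e Gamma} ->
  (forall c, c \in s -> exists2 m, m \in M & xedge (inl m) c) ->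
  exists W : {set xvert V K}, [/\ W0 \subset W, {subset s <= W},
    #|W| <= #|W0| + 3 * size s, {subset W <= is_sat e Gamma} & connected_in xedge W].
Proof.
move=> satW0 connW0 domW0; elim: s => [|c s IHs] sat_s dom_s.
  by exists W0; split; rewrite ?muln0 ?addn0.
have sat_s' : {subset s <= is_sat e Gamma}.
  by move=> y ys; apply: sat_s; rewrite inE ys orbT.
have dom_s' y : y \in s -> exists2 m, m \in M & xedge (inl m) y.
  by move=> ys; apply: dom_s; rewrite inE ys orbT.
have [W [sW0W sW cardW satW connW]] := IHs sat_s' dom_s'.
have [m mM mc] := dom_s c (mem_head c s).
have [x xW0 mx] := domW0 m mM.
have [W' [sWW' cW' cardW' satW' connW']] :=
  attach_terminal satW connW (ex_intro2 _ _ x (subsetP sW0W x xW0) mx)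
                  (sat_s c (mem_head c s)) mc.
exists W'; split=> //.
- exact: subset_trans sW0W sWW'.
- by move=> y; rewrite inE => /orP[/eqP->|/sW/(subsetP sWW')].
- rewrite /= mulnS addnCA addnC; apply: leq_trans cardW' _.
  by rewrite leq_add2r.
Qed.
End ExtendedGraph.

Theorem mainTheorem6 (V : finType) (e : rel V) (K : nat) (Gamma : V -> {set 'I_K})
  (e_sym : symmetric e) (e_irr : irreflexive e)
  (e_conn : forall x y : V, connect e x y) (V_ge2 : 2 <= #|V|)
  (K_pos : 0 < K) (Gamma_ne : forall u, Gamma u != set0)
  (M : {set V}) (NSB : {set xvert V K}) (ESB : {set {set xvert V K}})
  (hSB : min_sat_bridge e Gamma M NSB ESB)
  (C : {set xvert V K})
  (hCsat : {subset C <= is_sat e Gamma})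
  (hCadj : forall c, c \in C -> exists2 m, m \in M & xedge e Gamma (inl m) c) :
  (exists (N : {set xvert V K}) (F : {set {set xvert V K}}),
      [/\ sat_tree e Gamma N F, NSB :|: C \subset N &
          #|F| <= #|NSB| + 3 * #|C| - 1])
  /\ (forall (N : {set xvert V K}) (F : {set {set xvert V K}}),
        min_steiner_tree e Gamma C N F -> #|F| <= #|NSB| + 3 * #|C| - 1).
Proof.
have [[[treeSB satSB] domSB] _] := hSB.
have connSB := tree_connected_in (xedge_sym Gamma e_sym) treeSB.
have satC : {subset enum C <= is_sat e Gamma} by move=> c; rewrite mem_enum => /hCsat.
have domC c : c \in enum C -> exists2 m, m \in M & xedge e Gamma (inl m) c.
  by rewrite mem_enum => /hCadj.
have [W [sSBW sCW cardW satW connW]] :=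
  attach_terminals e_sym Gamma_ne satSB connSB domSB satC domC.
have sCW' : C \subset W by apply/subsetP=> c cC; apply: sCW; rewrite mem_enum.
have neW : W != set0.
  by case: treeSB => /set0Pn[x xSB] _ _ _; apply/set0Pn; exists x; apply: (subsetP sSBW).
have [F [treeF cardF]] := spanning_tree neW connW.
have boundF : #|F| <= #|NSB| + 3 * #|C| - 1.
  by rewrite -[#|F|]succnK cardF -subn1 leq_sub2r // [#|C|]cardE.
split=> [|N F' [_ minF']].
  by exists W, F; split=> //; rewrite subUset sSBW.
exact: leq_trans (minF' W F _) boundF.
Qed.
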